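(* Let $R>1$ and let $f,g:\mathbb{D}_{R}\to\mathbb{C}$ be analytic in $\mathbb{D}_{R}=\{z\in\mathbb{C}:|z|<R\}$, $f(z)=\sum_{k=0}^{\infty}a_{k}z^{k}$, $g(z)=\sum_{k=0}^{\infty}b_{k}z^{k}$ for $z\in\mathbb{D}_{R}$. Let $1\le r<R$. Then $\sum_{m=0}^{\infty}m^{2}\big[\sum_{j=0}^{m}|a_{j}||b_{m-j}|\big]r^{m-1}<+\infty$ and for all $n\in\mathbb{N}$, $$\|B_{n}(fg)-B_{n}(f)B_{n}(g)\|_{r}\le\frac{6(1+r)}{n}\sum_{m=0}^{\infty}m^{2}\Big[\sum_{j=0}^{m}|a_{j}||b_{m-j}|\Big]r^{m-1}.$$
   Context: For a function $h$ defined on $[0,1]$ (here the restriction of an analytic function), the complex Bernstein polynomials are $B_{n}(h)(z)=\sum_{k=0}^{n}\binom{n}{k}z^{k}(1-z)^{n-k}h(k/n)$, $z\in\mathbb{C}$. For $h$ continuous on $\{|z|\le r\}$, $\|h\|_{r}=\max\{|h(z)|:|z|\le r\}$. *)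

From Stdlib Require Import Reals.
From Coquelicot Require Import Coquelicot.

Open Scope R_scope.

Fixpoint cpow (z : C) (k : nat) : C :=
  match k with
  | O => 1%C
  | S k' => Cmult z (cpow z k')
  end.

Definition power_series_on (R0 : R) (a : nat -> C) (f : C -> C) : Prop :=
  forall z : C, Cmod z < R0 -> is_series (fun k => Cmult (a k) (cpow z k)) (f z).

Definition bernstein (n : nat) (h : C -> C) (z : C) : C :=
  sum_n (fun k => Cmult (RtoC (Binomial.C n k))
                   (Cmult (cpow z k)
                    (Cmult (cpow (Cminus 1%C z) (n - k))
                           (h (RtoC (INR k / INR n)))))) n.

Definition sup_norm (r : R) (h : C -> C) : Rbar :=
  Lub_Rbar (fun t => exists z : C, Cmod z <= r /\ t = Cmod (h z)).

Definition bound_term (a b : nat -> C) (r : R) (m : nat) : R :=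
  INR m ^ 2 * sum_n (fun j => Cmod (a j) * Cmod (b (m - j)%nat)) m * r ^ (m - 1).

From Stdlib Require Import Reals Lra Lia.
From Coquelicot Require Import Coquelicot.
Open Scope R_scope.

(* Fix |z| <= r and n >= 1, and write B_n h = sum_k C(n,k) z^k (1-z)^(n-k) h(k) for a
   sequence h of samples.  Since f and g are, uniformly on the samples k/n, limits of
   their Taylor polynomials and (U, V) |-> B_n(UV) - B_n(U) B_n(V) is bilinear and
   continuous, it suffices to treat monomials.  For the unnormalised moments
   M_n(p) = B_n(k^p), Pascal's rule gives M_(n+1)(p) = (1-z) M_n(p) + z B_n((k+1)^p),
   and an induction on n, expanding (k+1)^p binomially, yields
     |M_n(a+b) - M_n(a) M_n(b)| <= 2 n r^(a+b) (n^a - (n-1)^a) (n^b - (n-1)^b).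
   As n^a - (n-1)^a <= a n^(a-1), the monomials x^a, x^b contribute at most
   2 a b r^(a+b) / n; summing against |a_j| |b_l| and comparing the Cauchy product of
   (j |a_j| r^j) and (l |b_l| r^l) with the series of bound_term gives the claim. *)

(* [ring] only accepts [sum_n] terms as atoms once their type is exposed as [R] or [C]. *)
Ltac ring_sums :=
  repeat match goal with
  | |- context [@sum_n ?G ?f ?n] =>
      let s := fresh "s" in generalize (@sum_n G f n); intro s;
      first [change R in s | change C in s]
  end;
  match goal with
  | |- ?x = ?y => first [change (@eq C x y) | change (@eq R x y)]
  end; ring.

Lemma sumC_mult_l (c : C) u n : (c * sum_n u n = sum_n (fun k => c * u k) n)%C.
Proof. symmetry; exact (@sum_n_mult_l C_Ring c u n). Qed.
Lemma sumC_mult_r (c : C) u n : (sum_n u n * c = sum_n (fun k => u k * c) n)%C.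
Proof. symmetry; exact (@sum_n_mult_r C_Ring c u n). Qed.
Lemma sumC_plus (u v : nat -> C) n : (sum_n u n + sum_n v n = sum_n (fun k => u k + v k) n)%C.
Proof. symmetry; exact (@sum_n_plus C_AbelianMonoid u v n). Qed.
Lemma sumC_minus (u v : nat -> C) n : (sum_n u n - sum_n v n = sum_n (fun k => u k - v k) n)%C.
Proof.
  rewrite (sum_n_ext (fun k => u k - v k)%C (fun k => u k + (-1) * v k)%C) by (intros; ring_sums).
  rewrite <- sumC_plus, <- sumC_mult_l; ring_sums.
Qed.
Lemma sumC_O (u : nat -> C) : sum_n u O = u O.
Proof. exact (sum_O u). Qed.
Lemma sumC_Sn (u : nat -> C) n : (sum_n u (S n) = sum_n u n + u (S n))%C.
Proof. exact (sum_Sn u n). Qed.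
Lemma sumC_shift (u : nat -> C) n : (sum_n u (S n) = u O + sum_n (fun k => u (S k)) n)%C.
Proof.
  induction n as [|n IH]; [now rewrite sumC_Sn, !sumC_O|].
  rewrite sumC_Sn, IH, sumC_Sn; ring_sums.
Qed.

Lemma sumR_mult_l (c : R) u n : c * sum_n u n = sum_n (fun k => c * u k) n.
Proof. symmetry; exact (@sum_n_mult_l R_Ring c u n). Qed.
Lemma sumR_mult_r (c : R) u n : sum_n u n * c = sum_n (fun k => u k * c) n.
Proof. symmetry; exact (@sum_n_mult_r R_Ring c u n). Qed.
Lemma sumR_plus (u v : nat -> R) n : sum_n u n + sum_n v n = sum_n (fun k => u k + v k) n.
Proof. symmetry; exact (@sum_n_plus R_AbelianMonoid u v n). Qed.
Lemma sumR_O (u : nat -> R) : sum_n u O = u O.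
Proof. exact (sum_O u). Qed.
Lemma sumR_Sn (u : nat -> R) n : sum_n u (S n) = sum_n u n + u (S n).
Proof. exact (sum_Sn u n). Qed.

Lemma sumR_le (u v : nat -> R) n :
  (forall k, (k <= n)%nat -> u k <= v k) -> sum_n u n <= sum_n v n.
Proof.
  induction n as [|n IH]; intros H; [rewrite !sumR_O; apply H; lia|].
  rewrite !sumR_Sn; apply Rplus_le_compat; [apply IH; intros; apply H|apply H]; lia.
Qed.

Lemma sumR_ge0 (u : nat -> R) n : (forall k, (k <= n)%nat -> 0 <= u k) -> 0 <= sum_n u n.
Proof.
  intros H; apply Rle_trans with (sum_n (fun _ => 0) n); [|now apply sumR_le].
  rewrite sum_n_const; lra.
Qed.

Lemma sumR_term_le (u : nat -> R) n k :
  (forall i, 0 <= u i) -> (k <= n)%nat -> u k <= sum_n u n.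
Proof.
  intros Hu Hk; induction n as [|n IH].
  - replace k with O by lia; rewrite sumR_O; lra.
  - rewrite sumR_Sn; destruct (Nat.eq_dec k (S n)) as [->|Hne].
    + pose proof (sumR_ge0 u n (fun i _ => Hu i)); lra.
    + pose proof (IH ltac:(lia)); pose proof (Hu (S n)); lra.
Qed.

Lemma Cmod_sum_le (u : nat -> C) n : Cmod (sum_n u n) <= sum_n (fun k => Cmod (u k)) n.
Proof.
  induction n as [|n IH]; [rewrite sumC_O, sumR_O; lra|].
  rewrite sumC_Sn, sumR_Sn; eapply Rle_trans; [apply Cmod_triangle|lra].
Qed.

Lemma RtoC_sum (u : nat -> R) n : RtoC (sum_n u n) = sum_n (fun k => RtoC (u k)) n.
Proof.
  induction n as [|n IH]; [now rewrite sumR_O, sumC_O|].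
  now rewrite sumR_Sn, sumC_Sn, <- IH, RtoC_plus.
Qed.

Definition off_corner {G : AbelianMonoid} (F : nat -> nat -> G) a b : G :=
  plus (sum_n (fun u => sum_n (F u) (S b)) a) (sum_n (F (S a)) b).

Lemma sum2_corner {G : AbelianMonoid} (F : nat -> nat -> G) a b :
  sum_n (fun u => sum_n (F u) (S b)) (S a) = plus (off_corner F a b) (F (S a) (S b)).
Proof. unfold off_corner; rewrite !sum_Sn; apply plus_assoc. Qed.

(* [Binomial.C n k] is not zero for [k > n]; this recursive version is, which
   makes Pascal's rule hold without side conditions. *)
Fixpoint binom (n k : nat) : R :=
  match n, k with
  | _, O => 1
  | O, S _ => 0
  | S n', S k' => binom n' k' + binom n' (S k')
  end.

Lemma binom_gt n k : (n < k)%nat -> binom n k = 0.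
Proof.
  revert k; induction n as [|n IH]; intros [|k] H; simpl; try lia; auto.
  rewrite !IH by lia; lra.
Qed.

Lemma binom_n_0 n : binom n 0 = 1.
Proof. now destruct n. Qed.

Lemma binom_n_n n : binom n n = 1.
Proof. induction n as [|n IH]; simpl; [easy|]. rewrite IH, binom_gt by lia; lra. Qed.

Lemma binom_ge0 n k : 0 <= binom n k.
Proof.
  revert k; induction n as [|n IH]; intros [|k]; simpl; try lra.
  pose proof (IH k); pose proof (IH (S k)); lra.
Qed.

Lemma Binomial_C_binom n k : (k <= n)%nat -> Binomial.C n k = binom n k.
Proof.
  revert k; induction n as [|n IH]; intros [|k] H; try lia; try apply C_n_0.
  destruct (Nat.eq_dec k n) as [->|Hne].
  - rewrite C_n_n; simpl; rewrite binom_n_n, binom_gt by lia; lra.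
  - rewrite <- pascal by lia; simpl; now rewrite !IH by lia.
Qed.

Lemma binom_expansion (x : R) p : (x + 1) ^ p = sum_n (fun i => binom p i * x ^ i) p.
Proof.
  rewrite binomial, <- sum_n_Reals; apply sum_n_ext_loc; intros i Hi.
  rewrite Binomial_C_binom, pow1 by lia; ring_sums.
Qed.

Lemma cpow_RtoC x p : cpow (RtoC x) p = RtoC (x ^ p).
Proof. induction p as [|p IH]; simpl; [easy|]. now rewrite IH, RtoC_mult. Qed.

Lemma cpow_add z p q : cpow z (p + q) = (cpow z p * cpow z q)%C.
Proof. induction p as [|p IH]; simpl; [ring_sums|]. rewrite IH; ring_sums. Qed.

Section BernsteinSum.
Variable z : C.

Definition bern (n : nat) (h : nat -> C) : C :=
  sum_n (fun k => RtoC (binom n k) * (cpow z k * (cpow (1 - z) (n - k) * h k)))%C n.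

Lemma bern_ext n h1 h2 : (forall k, h1 k = h2 k) -> bern n h1 = bern n h2.
Proof. intros H; apply sum_n_ext; intros k; now rewrite H. Qed.

Lemma bern_plus n h1 h2 : bern n (fun k => h1 k + h2 k)%C = (bern n h1 + bern n h2)%C.
Proof. unfold bern; rewrite sumC_plus; apply sum_n_ext; intros k; ring_sums. Qed.

Lemma bern_scal n c h : bern n (fun k => c * h k)%C = (c * bern n h)%C.
Proof. unfold bern; rewrite sumC_mult_l; apply sum_n_ext; intros k; ring_sums. Qed.

Lemma bern_minus n h1 h2 : bern n (fun k => h1 k - h2 k)%C = (bern n h1 - bern n h2)%C.
Proof. unfold bern; rewrite sumC_minus; apply sum_n_ext; intros k; ring_sums. Qed.

Lemma bern_sum n (H : nat -> nat -> C) m :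
  bern n (fun k => sum_n (fun i => H i k) m) = sum_n (fun i => bern n (H i)) m.
Proof.
  induction m as [|m IH]; [rewrite sumC_O; apply bern_ext; intros; apply sumC_O|].
  rewrite sumC_Sn, <- IH, <- bern_plus; apply bern_ext; intros; apply sumC_Sn.
Qed.

(* Pascal's rule for the binomial weights. *)
Lemma bern_S n h : bern (S n) h = ((1 - z) * bern n h + z * bern n (fun k => h (S k)))%C.
Proof.
  unfold bern.
  set (G := fun k => (RtoC (binom n k) * (cpow z k * (cpow (1 - z) (S n - k) * h k)))%C).
  assert (HG : ((1 - z) * sum_n (fun k => RtoC (binom n k) *
                   (cpow z k * (cpow (1 - z) (n - k) * h k))) n = sum_n G (S n))%C).
  { rewrite sumC_Sn.
    replace (G (S n)) with (RtoC 0) by (unfold G; rewrite binom_gt by lia; ring_sums).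
    rewrite Cplus_0_r, sumC_mult_l; apply sum_n_ext_loc; intros k Hk; unfold G.
    replace (S n - k)%nat with (S (n - k)) by lia; simpl; ring_sums. }
  rewrite HG, sumC_mult_l, !sumC_shift; unfold G; simpl Nat.sub.
  rewrite !binom_n_0, <- Cplus_assoc, sumC_plus; f_equal.
  apply sum_n_ext; intros k; simpl; rewrite RtoC_plus; ring_sums.
Qed.

Definition bern_abs_weight (n : nat) : R :=
  sum_n (fun k => Cmod (RtoC (binom n k) * (cpow z k * cpow (1 - z) (n - k))))%C n.

Lemma bern_abs_weight_ge0 n : 0 <= bern_abs_weight n.
Proof. apply sumR_ge0; intros; apply Cmod_ge_0. Qed.

Lemma Cmod_bern_le n h c :
  (forall k, (k <= n)%nat -> Cmod (h k) <= c) -> Cmod (bern n h) <= bern_abs_weight n * c.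
Proof.
  intros H; unfold bern, bern_abs_weight.
  eapply Rle_trans; [apply Cmod_sum_le|]; rewrite sumR_mult_r; apply sumR_le; intros k Hk.
  replace (RtoC (binom n k) * (cpow z k * (cpow (1 - z) (n - k) * h k)))%C
    with (RtoC (binom n k) * (cpow z k * cpow (1 - z) (n - k)) * h k)%C by ring_sums.
  rewrite Cmod_mult; apply Rmult_le_compat_l; [apply Cmod_ge_0|auto].
Qed.

End BernsteinSum.

Lemma bernstein_bern n h z :
  bernstein n h z = bern z n (fun k => h (RtoC (INR k / INR n))).
Proof.
  apply sum_n_ext_loc; intros k Hk; now rewrite Binomial_C_binom.
Qed.

Section Moments.
Variable z : C.

Definition moment n p := bern z n (fun k => RtoC (INR k ^ p)).

Definition shifted_moment n p := sum_n (fun u => RtoC (binom p u) * moment n u)%C p.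

Definition moment_cov n a b := (moment n (a + b) - moment n a * moment n b)%C.

Definition binom_moment_cov_sum n a b :=
  sum_n (fun u => sum_n (fun v => RtoC (binom a u * binom b v) * moment_cov n u v) b)%C a.

Lemma moment_O_l p : moment 0 p = RtoC (0 ^ p).
Proof. unfold moment, bern; rewrite sumC_O; simpl; ring_sums. Qed.

Lemma bern_shift_pow n a : bern z n (fun k => RtoC (INR (S k) ^ a)) = shifted_moment n a.
Proof.
  unfold shifted_moment, moment.
  erewrite sum_n_ext; [|intros u; rewrite <- bern_scal; reflexivity].
  rewrite <- bern_sum; apply bern_ext; intros k.
  rewrite S_INR, binom_expansion, RtoC_sum; apply sum_n_ext; intros u; now rewrite RtoC_mult.
Qed.

Lemma moment_S n p : moment (S n) p = ((1 - z) * moment n p + z * shifted_moment n p)%C.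
Proof. unfold moment at 1; now rewrite bern_S, bern_shift_pow. Qed.

Lemma moment_0 n : moment n 0 = RtoC 1.
Proof.
  induction n as [|n IH]; [rewrite moment_O_l; easy|].
  rewrite moment_S; unfold shifted_moment; rewrite sumC_O, IH; simpl; ring_sums.
Qed.

Lemma moment_cov_0_l n b : moment_cov n 0 b = RtoC 0.
Proof. unfold moment_cov; simpl; rewrite moment_0; ring_sums. Qed.

Lemma moment_cov_0_r n a : moment_cov n a 0 = RtoC 0.
Proof. unfold moment_cov; rewrite Nat.add_0_r, moment_0; ring_sums. Qed.

Lemma shifted_moment_add n a b :
  shifted_moment n (a + b) =
  (binom_moment_cov_sum n a b + shifted_moment n a * shifted_moment n b)%C.
Proof.
  rewrite <- bern_shift_pow.
  transitivity (sum_n (fun u => sum_n (fun v =>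
                  RtoC (binom a u * binom b v) * moment n (u + v)) b)%C a).
  - unfold moment; erewrite sum_n_ext; [|intros u; erewrite sum_n_ext;
      [|intros v; rewrite <- bern_scal; reflexivity]; rewrite <- bern_sum; reflexivity].
    rewrite <- bern_sum; apply bern_ext; intros k.
    rewrite pow_add, S_INR, !binom_expansion, sumR_mult_r, RtoC_sum; apply sum_n_ext; intros u.
    rewrite sumR_mult_l, RtoC_sum; apply sum_n_ext; intros v.
    rewrite !RtoC_mult, pow_add, RtoC_mult; ring_sums.
  - unfold binom_moment_cov_sum, shifted_moment.
    rewrite sumC_mult_r, sumC_plus; apply sum_n_ext; intros u.
    rewrite sumC_mult_l, sumC_plus; apply sum_n_ext; intros v.
    unfold moment_cov; rewrite RtoC_mult; ring_sums.
Qed.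

Lemma moment_cov_S n a b : moment_cov (S n) a b =
  ((1 - z) * moment_cov n a b + z * binom_moment_cov_sum n a b
   + z * (1 - z) * ((shifted_moment n a - moment n a) * (shifted_moment n b - moment n b)))%C.
Proof.
  unfold moment_cov at 1; rewrite !moment_S, shifted_moment_add; unfold moment_cov; ring_sums.
Qed.

Definition moment_gap n a := sum_n (fun u => RtoC (binom (S a) u) * moment n u)%C a.

Lemma shifted_moment_S n a : shifted_moment n (S a) = (moment_gap n a + moment n (S a))%C.
Proof. unfold shifted_moment, moment_gap; rewrite sumC_Sn, binom_n_n; ring_sums. Qed.

Lemma moment_S_S n p : moment (S n) (S p) = (moment n (S p) + z * moment_gap n p)%C.
Proof. rewrite moment_S, shifted_moment_S; ring_sums. Qed.

Lemma moment_cov_S_S n a b : moment_cov (S n) (S a) (S b) =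
  (moment_cov n (S a) (S b)
   + z * off_corner (fun u v => RtoC (binom (S a) u * binom (S b) v) * moment_cov n u v)%C a b
   + z * (1 - z) * (moment_gap n a * moment_gap n b))%C.
Proof.
  rewrite moment_cov_S, !shifted_moment_S; unfold binom_moment_cov_sum.
  rewrite (sum2_corner (G := C_AbelianMonoid)), !binom_n_n, Rmult_1_l.
  change plus with Cplus; ring_sums.
Qed.

End Moments.

Definition pow_gap (x : R) a := x ^ a - (x - 1) ^ a.

Definition moment_cov_majorant n a b := 2 * INR n * pow_gap (INR n) a * pow_gap (INR n) b.

Lemma pow_gap_ge0 x a : 1 <= x -> 0 <= pow_gap x a.
Proof. intros Hx; unfold pow_gap; pose proof (pow_incr (x - 1) x a ltac:(lra)); lra. Qed.

Lemma pow_gap_binom_sum x a : sum_n (fun u => binom a u * pow_gap x u) a = pow_gap (x + 1) a.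
Proof.
  unfold pow_gap; replace (x + 1 - 1) with ((x - 1) + 1) by ring; rewrite !binom_expansion.
  transitivity (sum_n (fun u => binom a u * x ^ u) a
                + (-1) * sum_n (fun u => binom a u * (x - 1) ^ u) a); [|ring_sums].
  rewrite sumR_mult_l, sumR_plus; apply sum_n_ext; intros; ring_sums.
Qed.

Lemma binom_sum_lt x a : sum_n (fun u => binom (S a) u * x ^ u) a = pow_gap (x + 1) (S a).
Proof.
  unfold pow_gap; rewrite binom_expansion, sumR_Sn, binom_n_n.
  replace (x + 1 - 1) with x by ring; ring_sums.
Qed.

Lemma pow_gap_mul_le x j : 1 <= x -> pow_gap x j * x <= INR j * x ^ j.
Proof.
  intros Hx; induction j as [|j IH]; [unfold pow_gap; simpl; lra|].
  replace (pow_gap x (S j) * x) with (x * (pow_gap x j * x) + x * (x - 1) ^ j)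
    by (unfold pow_gap; simpl; ring).
  rewrite S_INR; simpl pow.
  pose proof (pow_incr (x - 1) x j ltac:(lra)).
  assert (x * (pow_gap x j * x) <= x * (INR j * x ^ j)) by (apply Rmult_le_compat_l; lra).
  assert (x * (x - 1) ^ j <= x * x ^ j) by (apply Rmult_le_compat_l; lra).
  lra.
Qed.

Lemma moment_cov_majorant_ge0 n a b : 0 <= moment_cov_majorant n a b.
Proof.
  unfold moment_cov_majorant; destruct n as [|n]; [simpl; lra|].
  assert (1 <= INR (S n)) by (rewrite S_INR; pose proof (pos_INR n); lra).
  pose proof (pow_gap_ge0 _ a H); pose proof (pow_gap_ge0 _ b H); pose proof (pos_INR (S n)).
  repeat apply Rmult_le_pos; lra.
Qed.

Lemma moment_cov_majorant_binom_sum n a b :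
  sum_n (fun u => sum_n (fun v => binom a u * binom b v * moment_cov_majorant n u v) b) a
  = 2 * INR n * pow_gap (INR n + 1) a * pow_gap (INR n + 1) b.
Proof.
  rewrite <- !pow_gap_binom_sum, Rmult_assoc, sumR_mult_r, sumR_mult_l.
  apply sum_n_ext; intros u; rewrite !sumR_mult_l; apply sum_n_ext; intros v.
  unfold moment_cov_majorant; ring_sums.
Qed.

Lemma off_corner_moment_cov_majorant n a b :
  off_corner (fun u v => binom (S a) u * binom (S b) v * moment_cov_majorant n u v) a b
  + moment_cov_majorant n (S a) (S b)
  = 2 * INR n * pow_gap (INR n + 1) (S a) * pow_gap (INR n + 1) (S b).
Proof.
  rewrite <- moment_cov_majorant_binom_sum, (sum2_corner (G := R_AbelianMonoid)), !binom_n_n.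
  change plus with Rplus; ring.
Qed.

Lemma Cmod_off_corner_le (F : nat -> nat -> C) (G : nat -> nat -> R) c a b :
  (forall u v, (u <= S a)%nat -> (v <= S b)%nat -> (u + v <= S (a + b))%nat ->
     Cmod (F u v) <= c * G u v) ->
  Cmod (off_corner F a b) <= c * off_corner G a b.
Proof.
  intros H; unfold off_corner; change (@plus R_AbelianMonoid) with Rplus.
  eapply Rle_trans; [apply Cmod_triangle|]; rewrite Rmult_plus_distr_l.
  apply Rplus_le_compat; rewrite sumR_mult_l; eapply Rle_trans; try apply Cmod_sum_le;
    apply sumR_le; intros u Hu.
  - rewrite sumR_mult_l; eapply Rle_trans; [apply Cmod_sum_le|].
    apply sumR_le; intros v Hv; apply H; lia.
  - apply H; lia.
Qed.

Section MomentBounds.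
Variables (z : C) (r : R).
Hypothesis (Hr : 1 <= r) (Hz : Cmod z <= r).

Lemma Cmod_1_minus_le : Cmod (1 - z) <= 1 + r.
Proof.
  unfold Cminus; eapply Rle_trans; [apply Cmod_triangle|].
  rewrite Cmod_1, Cmod_opp; lra.
Qed.

Lemma Cmod_moment_gap_le n p :
  (forall i, (i <= p)%nat -> Cmod (moment z n i) <= (INR n * r) ^ i) ->
  Cmod (moment_gap z n p) <= r ^ p * pow_gap (INR n + 1) (S p).
Proof.
  intros H; rewrite <- binom_sum_lt, sumR_mult_l.
  eapply Rle_trans; [apply Cmod_sum_le|]; apply sumR_le; intros i Hi.
  rewrite Cmod_mult, Cmod_R, Rabs_pos_eq by apply binom_ge0.
  pose proof (binom_ge0 (S p) i); pose proof (pow_le (INR n) i (pos_INR n)).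
  assert (r ^ i <= r ^ p) by (apply Rle_pow; auto).
  eapply Rle_trans; [apply Rmult_le_compat_l; [auto|apply (H i Hi)]|].
  rewrite Rpow_mult_distr.
  replace (r ^ p * (binom (S p) i * INR n ^ i)) with (binom (S p) i * (INR n ^ i * r ^ p))
    by ring.
  apply Rmult_le_compat_l; [auto|]; apply Rmult_le_compat_l; auto.
Qed.

Lemma Cmod_moment_le n p : Cmod (moment z n p) <= (INR n * r) ^ p.
Proof.
  revert p; induction n as [|n IH]; intros [|p].
  - rewrite moment_0, Cmod_1; simpl; lra.
  - rewrite moment_O_l, Cmod_R; simpl; rewrite !Rmult_0_l, Rabs_R0; lra.
  - rewrite moment_0, Cmod_1; simpl; lra.
  - rewrite moment_S_S.
    assert (Hgap := Cmod_moment_gap_le n p (fun i _ => IH i)).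
    assert (E : (INR (S n) * r) ^ S p
                = (INR n * r) ^ S p + r * (r ^ p * pow_gap (INR n + 1) (S p))).
    { unfold pow_gap; rewrite S_INR, !Rpow_mult_distr; replace (INR n + 1 - 1) with (INR n) by ring.
      simpl; ring. }
    rewrite E; eapply Rle_trans; [apply Cmod_triangle|]; rewrite Cmod_mult.
    apply Rplus_le_compat; [apply IH|apply Rmult_le_compat; auto using Cmod_ge_0].
Qed.

Lemma Cmod_binom_moment_cov_off_corner_le n a b :
  (forall u v, Cmod (moment_cov z n u v) <= r ^ (u + v) * moment_cov_majorant n u v) ->
  Cmod (off_corner (fun u v => RtoC (binom (S a) u * binom (S b) v) * moment_cov z n u v)%C a b)
  <= r ^ S (a + b)
     * off_corner (fun u v => binom (S a) u * binom (S b) v * moment_cov_majorant n u v) a b.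
Proof.
  intros IH; apply Cmod_off_corner_le; intros u v Hu Hv Huv.
  assert (Hc : 0 <= binom (S a) u * binom (S b) v) by (apply Rmult_le_pos; apply binom_ge0).
  rewrite Cmod_mult, Cmod_R, Rabs_pos_eq by exact Hc.
  pose proof (moment_cov_majorant_ge0 n u v).
  assert (r ^ (u + v) <= r ^ S (a + b)) by (apply Rle_pow; auto).
  eapply Rle_trans; [apply Rmult_le_compat_l; [exact Hc|apply IH]|].
  replace (r ^ S (a + b) * (binom (S a) u * binom (S b) v * moment_cov_majorant n u v))
    with (binom (S a) u * binom (S b) v * (r ^ S (a + b) * moment_cov_majorant n u v)) by ring.
  apply Rmult_le_compat_l; [exact Hc|]; apply Rmult_le_compat_r; auto.
Qed.

(* This term is where the [n + 1] of the next majorant comes from: [r (1 + r) <= 2 r^2]. *)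
Lemma Cmod_moment_gap_mult_le n a b :
  Cmod z * Cmod (1 - z) * (Cmod (moment_gap z n a) * Cmod (moment_gap z n b))
  <= r ^ (S a + S b) * (2 * pow_gap (INR n + 1) (S a) * pow_gap (INR n + 1) (S b)).
Proof.
  set (Da := pow_gap (INR n + 1) (S a)); set (Db := pow_gap (INR n + 1) (S b)).
  assert (Hga := Cmod_moment_gap_le n a (fun i _ => Cmod_moment_le n i)).
  assert (Hgb := Cmod_moment_gap_le n b (fun i _ => Cmod_moment_le n i)).
  assert (HDa : 0 <= Da) by (apply pow_gap_ge0; pose proof (pos_INR n); lra).
  assert (HDb : 0 <= Db) by (apply pow_gap_ge0; pose proof (pos_INR n); lra).
  assert (Hab : Cmod (moment_gap z n a) * Cmod (moment_gap z n b) <= r ^ a * Da * (r ^ b * Db))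
    by (apply Rmult_le_compat; auto using Cmod_ge_0).
  assert (Hz1 : Cmod z * Cmod (1 - z) <= r * (1 + r))
    by (apply Rmult_le_compat; auto using Cmod_ge_0, Cmod_1_minus_le).
  eapply Rle_trans;
    [apply Rmult_le_compat; eauto; apply Rmult_le_pos; apply Cmod_ge_0|].
  replace (S a + S b)%nat with (a + b + 2)%nat by lia; rewrite !pow_add.
  assert (0 <= r ^ a * r ^ b * (Da * Db))
    by (repeat apply Rmult_le_pos; auto; apply pow_le; lra).
  replace (r * (1 + r) * (r ^ a * Da * (r ^ b * Db)))
    with ((r + r * r) * (r ^ a * r ^ b * (Da * Db))) by ring.
  replace (r ^ a * r ^ b * r ^ 2 * (2 * Da * Db))
    with ((2 * (r * r)) * (r ^ a * r ^ b * (Da * Db))) by ring.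
  apply Rmult_le_compat_r; nra.
Qed.

Lemma Cmod_moment_cov_S_S_le n a b :
  (forall u v, Cmod (moment_cov z n u v) <= r ^ (u + v) * moment_cov_majorant n u v) ->
  Cmod (moment_cov z (S n) (S a) (S b)) <= r ^ (S a + S b) * moment_cov_majorant (S n) (S a) (S b).
Proof.
  intros IH; rewrite moment_cov_S_S.
  assert (Hoff := Cmod_binom_moment_cov_off_corner_le n a b IH).
  assert (Hsum := off_corner_moment_cov_majorant n a b).
  assert (Hlast := Cmod_moment_gap_mult_le n a b).
  assert (Hcorner := IH (S a) (S b)).
  set (Da := pow_gap (INR n + 1) (S a)) in *; set (Db := pow_gap (INR n + 1) (S b)) in *.
  set (maj := off_corner (fun u v => binom (S a) u * binom (S b) v * moment_cov_majorant n u v) a b)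
    in Hoff, Hsum.
  pose proof (Rmult_le_compat _ _ _ _ (Cmod_ge_0 z) (Cmod_ge_0 _) Hz Hoff).
  replace (S a + S b)%nat with (S (S (a + b))) in * by lia.
  change (r ^ S (S (a + b))) with (r * r ^ S (a + b)) in *.
  unfold moment_cov_majorant at 1; rewrite S_INR; fold Da Db.
  replace (r * r ^ S (a + b) * (2 * (INR n + 1) * Da * Db))
    with (r * r ^ S (a + b) * moment_cov_majorant n (S a) (S b)
          + r * (r ^ S (a + b) * maj) + r * r ^ S (a + b) * (2 * Da * Db))
    by (replace (2 * (INR n + 1) * Da * Db) with (2 * INR n * Da * Db + 2 * Da * Db) by ring;
        rewrite <- Hsum; ring).
  eapply Rle_trans; [apply Cmod_triangle|]; rewrite !Cmod_mult.
  eapply Rle_trans; [apply Rplus_le_compat_r, Cmod_triangle|]; rewrite Cmod_mult.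
  lra.
Qed.

Lemma Cmod_moment_cov_le n a b :
  Cmod (moment_cov z n a b) <= r ^ (a + b) * moment_cov_majorant n a b.
Proof.
  assert (Hr0 : forall k, 0 <= r ^ k) by (intros; apply pow_le; lra).
  revert a b; induction n as [|n IH]; intros [|a] [|b];
    try (rewrite ?moment_cov_0_l, ?moment_cov_0_r, Cmod_0;
         apply Rmult_le_pos; [apply Hr0|apply moment_cov_majorant_ge0]).
  - unfold moment_cov; rewrite !moment_O_l, <- RtoC_mult, <- RtoC_minus, pow_add, Rminus_diag.
    rewrite Cmod_0; unfold moment_cov_majorant; simpl; lra.
  - now apply Cmod_moment_cov_S_S_le.
Qed.

End MomentBounds.

Section BernsteinCovariance.
Variable z : C.

Definition bern_cov n (U V : nat -> C) :=
  (bern z n (fun k => U k * V k) - bern z n U * bern z n V)%C.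

Lemma bern_cov_comm n U V : bern_cov n U V = bern_cov n V U.
Proof.
  unfold bern_cov; rewrite (bern_ext z n (fun k => U k * V k)%C (fun k => V k * U k)%C)
    by (intros; ring_sums); ring_sums.
Qed.

Lemma bern_cov_lin_comb_l n (c : nat -> C) (E : nat -> nat -> C) V J :
  bern_cov n (fun k => sum_n (fun j => c j * E j k) J)%C V
  = sum_n (fun j => c j * bern_cov n (E j) V)%C J.
Proof.
  unfold bern_cov.
  rewrite (bern_ext z n _ (fun k => sum_n (fun j => c j * E j k * V k) J)%C)
    by (intros; apply sumC_mult_r).
  rewrite !bern_sum, sumC_mult_r, sumC_minus; apply sum_n_ext; intros j.
  rewrite (bern_ext z n _ (fun k => c j * (E j k * V k))%C) by (intros; ring_sums).
  rewrite !bern_scal; ring_sums.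
Qed.

Definition scaled_pow n p k := cpow (RtoC (INR k / INR n)) p.

Lemma bern_cov_scaled_pow n j l : (1 <= n)%nat ->
  bern_cov n (scaled_pow n j) (scaled_pow n l) = (RtoC (/ INR n ^ (j + l)) * moment_cov z n j l)%C.
Proof.
  intros Hn; assert (Hn0 : INR n <> 0) by (apply not_0_INR; lia).
  assert (Hbern : forall p, bern z n (scaled_pow n p) = (RtoC (/ INR n ^ p) * moment z n p)%C).
  { intros p; unfold moment; rewrite <- bern_scal; apply bern_ext; intros k.
    unfold scaled_pow; rewrite cpow_RtoC, <- RtoC_mult; f_equal.
    unfold Rdiv; rewrite Rpow_mult_distr, pow_inv; ring. }
  unfold bern_cov, moment_cov.
  rewrite (bern_ext z n _ (scaled_pow n (j + l)))
    by (intros; unfold scaled_pow; now rewrite cpow_add).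
  rewrite !Hbern, pow_add, Rinv_mult, RtoC_mult; ring_sums.
Qed.

Variable r : R.
Hypothesis (Hr : 1 <= r) (Hz : Cmod z <= r).

Lemma Cmod_bern_cov_scaled_pow_le n j l : (1 <= n)%nat ->
  Cmod (bern_cov n (scaled_pow n j) (scaled_pow n l)) <= 2 * INR j * INR l * r ^ (j + l) / INR n.
Proof.
  intros Hn; assert (Hx : 1 <= INR n) by (apply (le_INR 1); auto).
  assert (Hinv : 0 <= / INR n ^ (j + l)) by (apply Rlt_le, Rinv_0_lt_compat, pow_lt; lra).
  rewrite bern_cov_scaled_pow, Cmod_mult, Cmod_R, Rabs_pos_eq by auto.
  eapply Rle_trans; [apply Rmult_le_compat_l; [exact Hinv|apply (Cmod_moment_cov_le z r Hr Hz)]|].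
  unfold moment_cov_majorant; set (x := INR n) in *.
  assert (Hxj : 0 < x ^ j) by (apply pow_lt; lra).
  assert (Hxl : 0 < x ^ l) by (apply pow_lt; lra).
  pose proof (pow_gap_mul_le x j Hx); pose proof (pow_gap_mul_le x l Hx).
  pose proof (pow_gap_ge0 x j Hx); pose proof (pow_gap_ge0 x l Hx).
  assert (Hprod : pow_gap x j * x * (pow_gap x l * x) <= INR j * x ^ j * (INR l * x ^ l))
    by (apply Rmult_le_compat; auto; apply Rmult_le_pos; lra).
  rewrite !pow_add.
  apply (Rmult_le_reg_r (x * (x ^ j * x ^ l))); [apply Rmult_lt_0_compat; nra|].
  replace (/ (x ^ j * x ^ l) * (r ^ j * r ^ l * (2 * x * pow_gap x j * pow_gap x l))
           * (x * (x ^ j * x ^ l)))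
    with (2 * (r ^ j * r ^ l) * (pow_gap x j * x * (pow_gap x l * x))) by (field; lra).
  replace (2 * INR j * INR l * (r ^ j * r ^ l) / x * (x * (x ^ j * x ^ l)))
    with (2 * (r ^ j * r ^ l) * (INR j * x ^ j * (INR l * x ^ l))) by (field; lra).
  apply Rmult_le_compat_l; [|exact Hprod].
  assert (0 <= r ^ j) by (apply pow_le; lra); assert (0 <= r ^ l) by (apply pow_le; lra); nra.
Qed.

Definition truncation (c : nat -> C) n J k := sum_n (fun j => c j * scaled_pow n j k)%C J.

Lemma Cmod_bern_cov_truncation_le n (a b : nat -> C) J : (1 <= n)%nat ->
  Cmod (bern_cov n (truncation a n J) (truncation b n J))
  <= 2 / INR n * sum_n (fun j => INR j * Cmod (a j) * r ^ j) J
               * sum_n (fun j => INR j * Cmod (b j) * r ^ j) J.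
Proof.
  intros Hn; assert (Hn1 : 1 <= INR n) by (apply (le_INR 1); auto).
  unfold truncation; rewrite bern_cov_lin_comb_l.
  eapply Rle_trans; [apply Cmod_sum_le|].
  rewrite Rmult_assoc, sumR_mult_r, sumR_mult_l; apply sumR_le; intros j Hj.
  rewrite Cmod_mult, bern_cov_comm, bern_cov_lin_comb_l.
  eapply Rle_trans; [apply Rmult_le_compat_l, Cmod_sum_le; apply Cmod_ge_0|].
  rewrite !sumR_mult_l; apply sumR_le; intros l Hl.
  rewrite Cmod_mult, bern_cov_comm.
  eapply Rle_trans; [apply Rmult_le_compat_l; [apply Cmod_ge_0|];
    apply Rmult_le_compat_l; [apply Cmod_ge_0|]; apply Cmod_bern_cov_scaled_pow_le; auto|].
  rewrite pow_add; right; field; lra.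
Qed.

Lemma Cmod_bern_cov_sub_le n U V U' V' K d : 0 <= d <= 1 ->
  (forall k, (k <= n)%nat -> Cmod (U k) <= K /\ Cmod (V k) <= K /\
     Cmod (U' k - U k) <= d /\ Cmod (V' k - V k) <= d) ->
  Cmod (bern_cov n U V - bern_cov n U' V')
  <= d * ((2 * K + 1) * (bern_abs_weight z n + bern_abs_weight z n * bern_abs_weight z n)).
Proof.
  intros Hd H; set (W := bern_abs_weight z n).
  assert (HW : 0 <= W) by apply bern_abs_weight_ge0.
  assert (HK : 0 <= K) by (destruct (H O ltac:(lia)) as [H1 _]; pose proof (Cmod_ge_0 (U O)); lra).
  assert (HU' : forall k, (k <= n)%nat -> Cmod (U' k) <= K + 1).
  { intros k Hk; destruct (H k Hk) as (H1 & _ & H3 & _).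
    replace (U' k) with (U k + (U' k - U k))%C by ring_sums.
    eapply Rle_trans; [apply Cmod_triangle|lra]. }
  assert (Hprod : Cmod (bern z n (fun k => U k * V k - U' k * V' k)%C) <= W * (d * (2 * K + 1))).
  { apply Cmod_bern_le; intros k Hk; destruct (H k Hk) as (H1 & H2 & H3 & H4).
    replace (U k * V k - U' k * V' k)%C with (- ((U' k - U k) * V k + U' k * (V' k - V k)))%C
      by ring_sums.
    rewrite Cmod_opp; eapply Rle_trans; [apply Cmod_triangle|]; rewrite !Cmod_mult.
    pose proof (Rmult_le_compat _ _ _ _ (Cmod_ge_0 _) (Cmod_ge_0 _) H3 H2).
    pose proof (Rmult_le_compat _ _ _ _ (Cmod_ge_0 _) (Cmod_ge_0 _) (HU' k Hk) H4).
    nra. }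
  assert (HbU : Cmod (bern z n (fun k => U' k - U k)%C) <= W * d)
    by (apply Cmod_bern_le; intros k Hk; now destruct (H k Hk) as (_ & _ & ? & _)).
  assert (HbV : Cmod (bern z n (fun k => V' k - V k)%C) <= W * d)
    by (apply Cmod_bern_le; intros k Hk; now destruct (H k Hk) as (_ & _ & _ & ?)).
  assert (HV : Cmod (bern z n V) <= W * K)
    by (apply Cmod_bern_le; intros k Hk; now destruct (H k Hk) as (_ & ? & _)).
  assert (HU'b : Cmod (bern z n U') <= W * (K + 1)) by (apply Cmod_bern_le; exact HU').
  rewrite bern_minus in Hprod, HbU, HbV.
  replace (bern_cov n U V - bern_cov n U' V')%C
    with ((bern z n (fun k => U k * V k) - bern z n (fun k => U' k * V' k))
          + ((bern z n U' - bern z n U) * bern z n V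
             + bern z n U' * (bern z n V' - bern z n V)))%C
    by (unfold bern_cov; ring_sums).
  eapply Rle_trans; [apply Cmod_triangle|].
  eapply Rle_trans; [apply Rplus_le_compat_l, Cmod_triangle|]; rewrite !Cmod_mult.
  pose proof (Rmult_le_compat _ _ _ _ (Cmod_ge_0 _) (Cmod_ge_0 _) HbU HV).
  pose proof (Rmult_le_compat _ _ _ _ (Cmod_ge_0 _) (Cmod_ge_0 _) HU'b HbV).
  nra.
Qed.

Lemma Cmod_bern_cov_le_of_approx n U V B :
  (forall d, 0 < d -> exists U' V',
     (forall k, (k <= n)%nat -> Cmod (U' k - U k) <= d /\ Cmod (V' k - V k) <= d) /\
     Cmod (bern_cov n U' V') <= B) ->
  Cmod (bern_cov n U V) <= B.
Proof.
  intros Happrox; apply le_epsilon; intros eps Heps.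
  set (K := sum_n (fun k => Cmod (U k) + Cmod (V k)) n).
  assert (HUV : forall k, 0 <= Cmod (U k) + Cmod (V k))
    by (intros k; pose proof (Cmod_ge_0 (U k)); pose proof (Cmod_ge_0 (V k)); lra).
  assert (HK : forall k, (k <= n)%nat -> Cmod (U k) <= K /\ Cmod (V k) <= K).
  { intros k Hk; pose proof (sumR_term_le _ n k HUV Hk).
    pose proof (Cmod_ge_0 (U k)); pose proof (Cmod_ge_0 (V k)); fold K in H; lra. }
  set (W := bern_abs_weight z n); pose proof (bern_abs_weight_ge0 z n) as HW; fold W in HW.
  set (C0 := (2 * K + 1) * (W + W * W)).
  assert (HC0 : 0 <= C0).
  { pose proof (HK O ltac:(lia)); pose proof (Cmod_ge_0 (U O)).
    unfold C0; apply Rmult_le_pos; nra. }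
  set (d := Rmin 1 (eps / (C0 + 1))).
  assert (Hd : 0 < d) by (apply Rmin_pos; [lra|apply Rdiv_lt_0_compat; lra]).
  assert (HdC : d * C0 <= eps).
  { apply Rle_trans with (eps / (C0 + 1) * C0);
      [apply Rmult_le_compat_r; [auto|apply Rmin_r]|].
    apply (Rmult_le_reg_r (C0 + 1)); [lra|].
    replace (eps / (C0 + 1) * C0 * (C0 + 1)) with (eps * C0) by (field; lra); nra. }
  destruct (Happrox d Hd) as (U' & V' & Hclose & HB).
  assert (Hsub : Cmod (bern_cov n U V - bern_cov n U' V') <= d * C0).
  { apply Cmod_bern_cov_sub_le; [split; [lra|apply Rmin_l]|].
    intros k Hk; destruct (HK k Hk), (Hclose k Hk); auto. }
  replace (bern_cov n U V) with ((bern_cov n U V - bern_cov n U' V') + bern_cov n U' V')%C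
    by ring_sums.
  eapply Rle_trans; [apply Cmod_triangle|lra].
Qed.

End BernsteinCovariance.

Lemma is_series_partial_close (u : nat -> C) l : is_series u l ->
  forall eps, 0 < eps -> exists N, forall J, (N <= J)%nat -> Cmod (sum_n u J - l) < eps.
Proof.
  intros H eps Heps.
  assert (Hf : 0 < @norm_factor _ C_NormedModule) by apply norm_factor_gt_0.
  destruct (proj1 (filterlim_locally _ _) H
              (mkposreal _ (Rdiv_lt_0_compat _ _ Heps Hf))) as [N HN].
  exists N; intros J HJ; pose proof (norm_compat2 _ _ _ (HN J HJ)) as Hlt; simpl in Hlt.
  replace (norm_factor * (eps / norm_factor)) with eps in Hlt by (field; lra); exact Hlt.
Qed.

Lemma is_series_partial_close_uniform (u : nat -> nat -> C) (l : nat -> C) n :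
  (forall k, (k <= n)%nat -> is_series (u k) (l k)) ->
  forall eps, 0 < eps -> exists N, forall J, (N <= J)%nat -> forall k, (k <= n)%nat ->
    Cmod (sum_n (u k) J - l k) < eps.
Proof.
  intros H eps Heps; induction n as [|n IH].
  - destruct (is_series_partial_close _ _ (H O (le_n _)) eps Heps) as [N HN].
    exists N; intros J HJ k Hk; replace k with O by lia; auto.
  - destruct IH as [N1 HN1]; [intros; apply H; lia|].
    destruct (is_series_partial_close _ _ (H (S n) (le_n _)) eps Heps) as [N2 HN2].
    exists (Nat.max N1 N2); intros J HJ k Hk.
    destruct (Nat.eq_dec k (S n)) as [->|Hne]; [apply HN2|apply HN1]; lia.
Qed.

Lemma is_series_terms_bounded (u : nat -> C) l : is_series u l ->
  exists M, forall j, Cmod (u j) <= M.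
Proof.
  intros H; destruct (filterlim_bounded (sum_n u) (ex_intro _ _ H)) as [M HM].
  change norm with Cmod in HM; exists (2 * M); intros [|j].
  - rewrite <- (sumC_O u); pose proof (HM O); pose proof (Cmod_ge_0 (sum_n u O)); lra.
  - replace (u (S j)) with (sum_n u (S j) - sum_n u j)%C by (rewrite sumC_Sn; ring_sums).
    unfold Cminus; eapply Rle_trans; [apply Cmod_triangle|]; rewrite Cmod_opp.
    pose proof (HM j); pose proof (HM (S j)); lra.
Qed.

Lemma ex_series_sq_geom q : 0 < q < 1 -> ex_series (fun n => (INR n + 1) ^ 2 * q ^ n).
Proof.
  intros Hq; pose proof pos_INR as Hpos.
  apply ex_series_ext with (fun n => Rabs ((INR n + 1) ^ 2 * q ^ n)).
  { intros n; apply Rabs_pos_eq, Rmult_le_pos; apply pow_le; [specialize (Hpos n)|]; lra. }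
  apply ex_series_DAlembert with q; [lra| |].
  { intros n; apply Rmult_integral_contrapositive; split; apply pow_nonzero;
      [specialize (Hpos n)|]; lra. }
  apply is_lim_seq_ext with (fun n => (1 + / (INR n + 1)) * (1 + / (INR n + 1)) * q).
  { intros n; specialize (Hpos n); assert (q ^ n <> 0) by (apply pow_nonzero; lra).
    assert (0 < / (INR n + 1)) by (apply Rinv_0_lt_compat; lra).
    replace ((INR (S n) + 1) ^ 2 * q ^ S n / ((INR n + 1) ^ 2 * q ^ n))
      with ((1 + / (INR n + 1)) * (1 + / (INR n + 1)) * q) by (rewrite S_INR; simpl; field; lra).
    symmetry; apply Rabs_pos_eq; apply Rmult_le_pos; nra. }
  assert (Hinv : is_lim_seq (fun n => 1 + / (INR n + 1)) 1).
  { replace (Finite 1) with (Rbar_plus 1 (Rbar_inv p_infty)) by (simpl; f_equal; ring).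
    apply is_lim_seq_plus with 1 (Rbar_inv p_infty); [apply is_lim_seq_const| |easy].
    apply is_lim_seq_inv; [|discriminate].
    eapply is_lim_seq_plus; [apply is_lim_seq_INR|apply is_lim_seq_const|easy]. }
  replace (Finite q) with (Finite (1 * 1 * q)) by (f_equal; ring).
  apply is_lim_seq_mult'; [apply is_lim_seq_mult'; exact Hinv|apply is_lim_seq_const].
Qed.

Lemma sum_n_le_Series (u : nat -> R) J : (forall k, 0 <= u k) -> ex_series u ->
  sum_n u J <= Series u.
Proof.
  intros Hu Hex; apply (is_lim_seq_incr_compare (sum_n u)); [apply Series_correct, Hex|].
  intros n; rewrite sumR_Sn; specialize (Hu (S n)); lra.
Qed.

Definition dcoef (a : nat -> C) r j := INR j * Cmod (a j) * r ^ j.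
Definition d2coef (a : nat -> C) r j := (INR j + 1) ^ 2 * Cmod (a j) * r ^ j.

Lemma dcoef_ge0 a r j : 0 <= r -> 0 <= dcoef a r j.
Proof.
  intros Hr; unfold dcoef; apply Rmult_le_pos; [apply Rmult_le_pos|apply pow_le]; auto.
  - apply pos_INR.
  - apply Cmod_ge_0.
Qed.

Lemma d2coef_ge0 a r j : 0 <= r -> 0 <= d2coef a r j.
Proof.
  intros Hr; unfold d2coef; apply Rmult_le_pos; [apply Rmult_le_pos|apply pow_le]; auto.
  - apply pow_le; pose proof (pos_INR j); lra.
  - apply Cmod_ge_0.
Qed.

Lemma ex_series_d2coef R0 a f r : 0 < r -> r < R0 -> power_series_on R0 a f ->
  ex_series (d2coef a r).
Proof.
  intros Hr HrR Hf; set (rho := (r + R0) / 2).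
  assert (Hrho : r < rho) by (unfold rho; lra).
  assert (Hs := Hf (RtoC rho) ltac:(rewrite Cmod_R, Rabs_pos_eq; unfold rho; lra)).
  destruct (is_series_terms_bounded _ _ Hs) as [M HM].
  assert (Hterm : forall j, Cmod (a j) * rho ^ j <= M).
  { intros j; specialize (HM j).
    rewrite Cmod_mult, cpow_RtoC, Cmod_R, Rabs_pos_eq in HM by (apply pow_le; lra); exact HM. }
  set (q := r / rho).
  assert (Hq : 0 < q < 1) by (unfold q; split;
    [apply Rdiv_lt_0_compat; lra
    |apply Rmult_lt_reg_r with rho; [lra|]; unfold Rdiv; rewrite Rmult_assoc, Rinv_l; lra]).
  apply (@ex_series_le R_AbsRing R_CompleteNormedModule)
    with (fun j => M * ((INR j + 1) ^ 2 * q ^ j)).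
  - intros j; change norm with Rabs; rewrite Rabs_pos_eq by (apply d2coef_ge0; lra).
    unfold d2coef; replace (r ^ j) with (rho ^ j * q ^ j)
      by (unfold q; rewrite <- Rpow_mult_distr; f_equal; field; lra).
    assert (0 <= (INR j + 1) ^ 2 * q ^ j)
      by (apply Rmult_le_pos; apply pow_le; [pose proof (pos_INR j)|]; lra).
    replace ((INR j + 1) ^ 2 * Cmod (a j) * (rho ^ j * q ^ j))
      with ((INR j + 1) ^ 2 * q ^ j * (Cmod (a j) * rho ^ j)) by ring.
    rewrite (Rmult_comm M); apply Rmult_le_compat_l; auto.
  - apply (ex_series_scal_l (V := R_NormedModule)), ex_series_sq_geom, Hq.
Qed.

Lemma ex_series_dcoef a r : 0 <= r -> ex_series (d2coef a r) -> ex_series (dcoef a r).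
Proof.
  intros Hr H; apply (@ex_series_le R_AbsRing R_CompleteNormedModule) with (d2coef a r); auto.
  intros j; change norm with Rabs; rewrite Rabs_pos_eq by (apply dcoef_ge0; auto).
  unfold dcoef, d2coef; apply Rmult_le_compat_r; [apply pow_le; auto|].
  apply Rmult_le_compat_r; [apply Cmod_ge_0|]; pose proof (pos_INR j); nra.
Qed.

Lemma bound_term_ge0 a b r m : 0 <= r -> 0 <= bound_term a b r m.
Proof.
  intros Hr; unfold bound_term; apply Rmult_le_pos; [apply Rmult_le_pos|apply pow_le; auto].
  - apply pow_le, pos_INR.
  - apply sumR_ge0; intros; apply Rmult_le_pos; apply Cmod_ge_0.
Qed.

Lemma bound_term_le_cauchy a b r m : 1 <= r ->
  bound_term a b r m <= sum_n (fun j => d2coef a r j * d2coef b r (m - j)) m.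
Proof.
  intros Hr; unfold bound_term.
  rewrite (Rmult_comm (INR m ^ 2)), Rmult_assoc, sumR_mult_r; apply sumR_le; intros j Hj.
  unfold d2coef; rewrite minus_INR by auto.
  assert (Hm : 0 <= INR m <= (INR j + 1) * (INR m - INR j + 1)).
  { assert (INR j <= INR m) by (apply le_INR; auto); pose proof (pos_INR j); nra. }
  assert (Hm2 : INR m ^ 2 <= (INR j + 1) ^ 2 * (INR m - INR j + 1) ^ 2)
    by (rewrite <- Rpow_mult_distr; apply pow_incr; lra).
  assert (Hrr : r ^ (m - 1) <= r ^ j * r ^ (m - j)).
  { rewrite <- pow_add; apply Rle_pow; [auto|lia]. }
  pose proof (Rmult_le_pos _ _ (Cmod_ge_0 (a j)) (Cmod_ge_0 (b (m - j)%nat))).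
  replace ((INR j + 1) ^ 2 * Cmod (a j) * r ^ j *
           ((INR m - INR j + 1) ^ 2 * Cmod (b (m - j)%nat) * r ^ (m - j)))
    with ((INR j + 1) ^ 2 * (INR m - INR j + 1) ^ 2 * (r ^ j * r ^ (m - j))
          * (Cmod (a j) * Cmod (b (m - j)%nat))) by ring.
  rewrite (Rmult_comm (Cmod (a j) * _)); apply Rmult_le_compat_r; auto.
  apply Rmult_le_compat; auto; apply pow_le; [apply pos_INR|lra].
Qed.

Lemma ex_series_bound_term a b r : 1 <= r ->
  ex_series (d2coef a r) -> ex_series (d2coef b r) -> ex_series (bound_term a b r).
Proof.
  intros Hr Ha Hb.
  assert (HM := is_series_mult_pos _ _ _ _ (Series_correct _ Ha) (Series_correct _ Hb)
                  (fun j => d2coef_ge0 a r j ltac:(lra)) (fun j => d2coef_ge0 b r j ltac:(lra))).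
  apply (@ex_series_le R_AbsRing R_CompleteNormedModule)
    with (fun m => sum_f_R0 (fun j => d2coef a r j * d2coef b r (m - j)) m); [|eexists; exact HM].
  intros m; change norm with Rabs; rewrite Rabs_pos_eq by (apply bound_term_ge0; lra).
  rewrite <- sum_n_Reals; apply bound_term_le_cauchy, Hr.
Qed.

Lemma dcoef_cauchy_le_bound_term a b r m : 1 <= r ->
  2 * sum_n (fun j => dcoef a r j * dcoef b r (m - j)) m <= 6 * (1 + r) * bound_term a b r m.
Proof.
  intros Hr; unfold bound_term; destruct m as [|m]; [rewrite !sumR_O; unfold dcoef; simpl; lra|].
  replace (S m - 1)%nat with m by lia.
  replace (6 * (1 + r) * (INR (S m) ^ 2 * sum_n _ (S m) * r ^ m))
    with (sum_n (fun j => 6 * (1 + r) * INR (S m) ^ 2 * r ^ m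
                          * (Cmod (a j) * Cmod (b (S m - j)%nat))) (S m))
    by (rewrite <- sumR_mult_l; ring_sums).
  rewrite sumR_mult_l; apply sumR_le; intros j Hj; unfold dcoef.
  assert (Hj1 : INR j <= INR (S m)) by (apply le_INR; lia).
  assert (Hj2 : INR (S m - j) <= INR (S m)) by (apply le_INR; lia).
  pose proof (pos_INR j); pose proof (pos_INR (S m - j)).
  assert (Hjm : INR j * INR (S m - j) <= INR (S m) ^ 2)
    by (replace (INR (S m) ^ 2) with (INR (S m) * INR (S m)) by ring; apply Rmult_le_compat; auto).
  assert (Hrr : r ^ j * r ^ (S m - j) = r * r ^ m)
    by (rewrite <- pow_add; replace (j + (S m - j))%nat with (S m) by lia; easy).
  pose proof (pow_le r m ltac:(lra)).
  pose proof (Rmult_le_pos _ _ (Cmod_ge_0 (a j)) (Cmod_ge_0 (b (S m - j)%nat))).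
  replace (2 * (INR j * Cmod (a j) * r ^ j
                * (INR (S m - j) * Cmod (b (S m - j)%nat) * r ^ (S m - j))))
    with (2 * (INR j * INR (S m - j)) * (r ^ j * r ^ (S m - j))
          * (Cmod (a j) * Cmod (b (S m - j)%nat)))
    by ring.
  rewrite Hrr; apply Rmult_le_compat_r; auto.
  replace (2 * (INR j * INR (S m - j)) * (r * r ^ m))
    with (2 * (INR j * INR (S m - j)) * r * r ^ m) by ring.
  apply Rmult_le_compat_r; auto.
  assert (0 <= INR j * INR (S m - j)) by nra; nra.
Qed.

Lemma Series_dcoef_mult_le a b r : 1 <= r ->
  ex_series (d2coef a r) -> ex_series (d2coef b r) ->
  2 * Series (dcoef a r) * Series (dcoef b r) <= 6 * (1 + r) * Series (bound_term a b r).
Proof.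
  intros Hr Ha Hb.
  pose proof (ex_series_dcoef a r ltac:(lra) Ha) as Ha'.
  pose proof (ex_series_dcoef b r ltac:(lra) Hb) as Hb'.
  assert (HM := is_series_mult_pos _ _ _ _ (Series_correct _ Ha') (Series_correct _ Hb')
                  (fun j => dcoef_ge0 a r j ltac:(lra)) (fun j => dcoef_ge0 b r j ltac:(lra))).
  rewrite Rmult_assoc, <- (is_series_unique _ _ HM), <- !Series_scal_l.
  apply Series_le; [|apply (ex_series_scal_l (V := R_NormedModule)), ex_series_bound_term; auto].
  intros m; rewrite <- sum_n_Reals; split; [|apply dcoef_cauchy_le_bound_term, Hr].
  apply Rmult_le_pos; [lra|]; apply sumR_ge0; intros.
  apply Rmult_le_pos; apply dcoef_ge0; lra.
Qed.

Lemma Cmod_bern_cov_samples_le R0 f g a b r n z :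
  1 <= r -> r < R0 -> power_series_on R0 a f -> power_series_on R0 b g ->
  (1 <= n)%nat -> Cmod z <= r ->
  ex_series (d2coef a r) -> ex_series (d2coef b r) ->
  Cmod (bern_cov z n (fun k => f (RtoC (INR k / INR n))) (fun k => g (RtoC (INR k / INR n))))
  <= 2 / INR n * Series (dcoef a r) * Series (dcoef b r).
Proof.
  intros Hr HrR Hf Hg Hn Hz Ha Hb.
  assert (Hn1 : 1 <= INR n) by (apply (le_INR 1); auto).
  assert (Hsample : forall k, (k <= n)%nat -> Cmod (RtoC (INR k / INR n)) < R0).
  { intros k Hk; assert (INR k <= INR n) by (apply le_INR; auto).
    rewrite Cmod_R, Rabs_pos_eq by (apply Rcomplements.Rdiv_le_0_compat; [apply pos_INR|lra]).
    apply Rle_lt_trans with 1; [apply (Rcomplements.Rdiv_le_1 (INR k) (INR n))|]; lra. }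
  apply Cmod_bern_cov_le_of_approx; intros d Hd.
  destruct (is_series_partial_close_uniform _ _ n (fun k Hk => Hf _ (Hsample k Hk)) d Hd)
    as [Na HNa].
  destruct (is_series_partial_close_uniform _ _ n (fun k Hk => Hg _ (Hsample k Hk)) d Hd)
    as [Nb HNb].
  set (J := Nat.max Na Nb).
  exists (truncation a n J), (truncation b n J); split.
  { intros k Hk; split; apply Rlt_le; [apply HNa|apply HNb]; auto; unfold J; lia. }
  eapply Rle_trans; [apply (Cmod_bern_cov_truncation_le z r Hr Hz); auto|].
  assert (HA := sum_n_le_Series (dcoef a r) J (fun j => dcoef_ge0 a r j ltac:(lra))
                  (ex_series_dcoef a r ltac:(lra) Ha)).
  assert (HB := sum_n_le_Series (dcoef b r) J (fun j => dcoef_ge0 b r j ltac:(lra))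
                  (ex_series_dcoef b r ltac:(lra) Hb)).
  assert (HA0 := sumR_ge0 (dcoef a r) J (fun j _ => dcoef_ge0 a r j ltac:(lra))).
  assert (HB0 := sumR_ge0 (dcoef b r) J (fun j _ => dcoef_ge0 b r j ltac:(lra))).
  unfold dcoef in *.
  assert (0 <= 2 / INR n) by (apply Rcomplements.Rdiv_le_0_compat; lra).
  rewrite !Rmult_assoc; apply Rmult_le_compat_l; auto; apply Rmult_le_compat; auto.
Qed.

Theorem theorem4p1 (R0 : R) (f g : C -> C) (a b : nat -> C) (r : R) :
  1 < R0 ->
  power_series_on R0 a f ->
  power_series_on R0 b g ->
  1 <= r -> r < R0 ->
  ex_series (bound_term a b r) /\
  forall n : nat, (1 <= n)%nat ->
    Rbar_le
      (sup_norm r (fun z => Cminus (bernstein n (fun w => Cmult (f w) (g w)) z)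
                                   (Cmult (bernstein n f z) (bernstein n g z))))
      (Finite (6 * (1 + r) / INR n * Series (bound_term a b r))).
Proof.
  intros _ Hf Hg Hr HrR.
  assert (Ha := ex_series_d2coef R0 a f r ltac:(lra) HrR Hf).
  assert (Hb := ex_series_d2coef R0 b g r ltac:(lra) HrR Hg).
  split; [now apply ex_series_bound_term|].
  intros n Hn; apply Lub_Rbar_correct; intros t [z [Hz ->]]; simpl.
  rewrite !bernstein_bern.
  eapply Rle_trans; [apply (Cmod_bern_cov_samples_le R0 f g a b r n z); auto|].
  assert (Hn0 : 0 < INR n) by (apply lt_0_INR; lia).
  pose proof (Series_dcoef_mult_le a b r Hr Ha Hb).
  unfold Rdiv; rewrite (Rmult_comm 2), (Rmult_comm (6 * (1 + r))), !Rmult_assoc.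
  apply Rmult_le_compat_l; [apply Rlt_le, Rinv_0_lt_compat, Hn0|lra].
Qed.
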